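(* Let $\mathcal{D}$ be a fixed probability distribution on $\mathcal{X}\times\{-1,+1\}$ with $\mathcal{X}\subseteq\mathbb{R}^d$, marginal $\mathcal{D}_\mathbf{x}$ and conditional label distribution $\mathcal{D}_y(\mathbf{x})$. For $\mathbf{w}\in\mathbb{R}^d$ let $h_\mathbf{w}(\mathbf{x})=\mathrm{sign}(\langle\mathbf{w},\mathbf{x}\rangle)$ and $\eta_\mathbf{w}(\mathbf{x})=\mathbb{P}_{y\sim\mathcal{D}_y(\mathbf{x})}[h_\mathbf{w}(\mathbf{x})\neq y]$. Let $R=\max_{\mathbf{x}\sim\mathcal{D}_\mathbf{x}}\|\mathbf{x}\|_2$ (the radius of the support of $\mathcal{D}_\mathbf{x}$) and $\gamma>0$, and let $$\widetilde{\mathbf{w}}=\mathop{\mathrm{argmin}}_{\mathbf{w},\|\mathbf{w}\|_2\le1}\mathbb{E}_{\mathbf{x}\sim\mathcal{D}_\mathbf{x}}\big[|\langle\mathbf{w},\mathbf{x}\rangle|\,\eta_\mathbf{w}(\mathbf{x})\,\big|\,|\langle\mathbf{w},\mathbf{x}\rangle|\ge\gamma\big],\qquad \bar{\mathbf{w}}=\mathop{\mathrm{argmin}}_{\mathbf{w},\|\mathbf{w}\|_2\le1}\mathbb{E}_{\mathbf{x}\sim\mathcal{D}_\mathbf{x}}\big[\eta_\mathbf{w}(\mathbf{x})\,\big|\,|\langle\mathbf{w},\mathbf{x}\rangle|\ge\gamma\big].$$ Then $$\frac{\gamma}{R}\,\mathbb{E}_{\mathbf{x}\sim\mathcal{D}_\mathbf{x}}\big[\eta_{\widetilde{\mathbf{w}}}(\mathbf{x})\,\big|\,|\langle\widetilde{\mathbf{w}},\mathbf{x}\rangle|\ge\gamma\big]\le\mathbb{E}_{\mathbf{x}\sim\mathcal{D}_\mathbf{x}}\big[\eta_{\bar{\mathbf{w}}}(\mathbf{x})\,\big|\,|\langle\bar{\mathbf{w}},\mathbf{x}\rangle|\ge\gamma\big]\le\mathbb{E}_{\mathbf{x}\sim\mathcal{D}_\mathbf{x}}\big[\eta_{\widetilde{\mathbf{w}}}(\mathbf{x})\,\big|\,|\langle\widetilde{\mathbf{w}},\mathbf{x}\rangle|\ge\gamma\big].$$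 *)

From HB Require Import structures.
From mathcomp Require Import all_boot all_order all_algebra.
From mathcomp Require Import all_classical all_reals all_analysis ess_sup_inf.
Set Implicit Arguments. Unset Strict Implicit. Unset Printing Implicit Defensive.
Import Order.TTheory GRing.Theory Num.Theory.
Import numFieldNormedType.Exports.
Local Open Scope classical_set_scope.
Local Open Scope ring_scope.

(** R^d with its Borel sigma-algebra (generated by the open sets of the
    product topology). Vectors are row vectors 'rV[R]_d. *)
Definition Rvec (R : realType) (d : nat) :=
  g_sigma_algebraType (@open 'rV[R]_d).

Definition dotp (R : realType) (d : nat) (u v : 'rV[R]_d) : R :=
  \sum_(i < d) u ord0 i * v ord0 i.
Definition norm2 (R : realType) (d : nat) (u : 'rV[R]_d) : R :=
  Num.sqrt (dotp u u).

Definition hw (R : realType) (d : nat) (w x : 'rV[R]_d) : R :=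
  Num.sg (dotp w x).

(** eta_w(x) = P_{y ~ D_y(x)} [h_w(x) <> y], where the conditional label
    distribution D_y(x) gives y = +1 with probability p x and y = -1 with
    probability 1 - p x. *)
Definition eta (R : realType) (d : nat) (p : 'rV[R]_d -> R) (w x : 'rV[R]_d) : R :=
  (if hw w x != 1 then p x else 0) + (if hw w x != -1 then 1 - p x else 0).

Definition margin_set (R : realType) (d : nat) (gamma : R) (w : 'rV[R]_d)
  : set (Rvec R d) := [set x | gamma <= `|dotp w x|].

Definition condE (R : realType) (d : nat) (P : probability (Rvec R d) R)
  (A : set (Rvec R d)) (f : Rvec R d -> R) : R :=
  Rintegral P A f / fine (P A).

Definition obj_tilde (R : realType) (d : nat) (P : probability (Rvec R d) R)
  (p : 'rV[R]_d -> R) (gamma : R) (w : 'rV[R]_d) : R :=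
  condE P (margin_set gamma w) (fun x => `|dotp w x| * eta p w x).
Definition obj_bar (R : realType) (d : nat) (P : probability (Rvec R d) R)
  (p : 'rV[R]_d -> R) (gamma : R) (w : 'rV[R]_d) : R :=
  condE P (margin_set gamma w) (fun x => eta p w x).

(** Feasible w: in the closed unit ball, and such that the conditioning
    event has positive probability (so the conditional expectation is
    defined). *)
Definition feasible (R : realType) (d : nat) (P : probability (Rvec R d) R)
  (gamma : R) (w : 'rV[R]_d) : Prop :=
  norm2 w <= 1 /\ (0 < P (margin_set gamma w))%E.

From Pilot Require Import Defs.
From HB Require Import structures.
From mathcomp Require Import all_boot all_order all_algebra.
From mathcomp Require Import all_classical all_reals all_analysis ess_sup_inf.
From mathcomp Require Import measurable_realfun ring lra.
Set Implicit Arguments. Unset Strict Implicit. Unset Printing Implicit Defensive.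
Import Order.TTheory GRing.Theory Num.Theory.
Import numFieldNormedType.Exports.
Local Open Scope classical_set_scope.
Local Open Scope ring_scope.

(* On the margin event of a vector w of the unit ball, Cauchy-Schwarz gives
   gamma <= |<w, x>| <= |x| <= R almost surely; as eta_w >= 0, this yields
   gamma * bar(w) <= tilde(w) <= R * bar(w) for every feasible w.  Optimality
   of w~ for tilde then chains into
     gamma * bar(w~) <= tilde(w~) <= tilde(w-bar) <= R * bar(w-bar),
   while the second inequality is just the optimality of w-bar. *)

Lemma ae_ge0_le_Rintegral d (T : measurableType d) (R : realType)
    (mu : {measure set T -> \bar R}) (D : set T) (f g : T -> R) :
  measurable D ->
  mu.-integrable D (EFin \o f) -> mu.-integrable D (EFin \o g) ->
  (forall x, D x -> 0 <= f x) -> (forall x, D x -> 0 <= g x) ->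
  {ae mu, forall x, D x -> f x <= g x} ->
  \int[mu]_(x in D) f x <= \int[mu]_(x in D) g x.
Proof.
move=> mD intf intg f0 g0 fg; rewrite /Rintegral fine_le ?integrable_fin_num //.
apply: ae_ge0_le_integral => //.
- exact: measurable_int intf.
- exact: measurable_int intg.
Qed.

Lemma ae_bounded_integrable d (T : measurableType d) (R : realType)
    (mu : {finite_measure set T -> \bar R}) (D : set T) (f : T -> R) (M : R) :
  measurable D -> measurable_fun D f ->
  {ae mu, forall x, D x -> `|f x| <= M} -> mu.-integrable D (EFin \o f).
Proof.
move=> mD mf fM; apply/integrableP; split; first exact/measurable_EFinP.
apply: (@le_lt_trans _ _ (\int[mu]_(x in D) (`|M|)%:E)%E).
  apply: ae_ge0_le_integral => //.
    by apply/measurable_EFinP; exact: measurableT_comp.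
  by apply: filterS fM => x fxM Dx /=; rewrite lee_fin (le_trans (fxM Dx)) ?ler_norm.
by rewrite integral_cst //= lte_mul_pinfty // -ge0_fin_numE ?fin_num_measure.
Qed.

Section CauchySchwarz.
Variables (R : realType) (d : nat).
Implicit Types u v : 'rV[R]_d.

Lemma dotpp_ge0 u : 0 <= dotp u u.
Proof. by apply: sumr_ge0 => i _; rewrite -expr2 sqr_ge0. Qed.

Lemma dotpp_eq0 u v : dotp v v = 0 -> dotp u v = 0.
Proof.
move=> /eqP; rewrite psumr_eq0 => [/allP v0|i _]; last by rewrite -expr2 sqr_ge0.
apply: big1 => i _; have /= := v0 i (mem_index_enum i).
by rewrite mulf_eq0 orbb => /eqP ->; rewrite mulr0.
Qed.

(* [dotp v v * (dotp u u * dotp v v - dotp u v ^+ 2)] is the squared length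
   of [dotp v v *: u - dotp u v *: v], hence nonnegative. *)
Lemma dotp_sqr_le u v : dotp u v ^+ 2 <= dotp u u * dotp v v.
Proof.
set a := dotp u u; set b := dotp v v; set c := dotp u v.
have [b0|b_neq0] := eqVneq b 0; first by rewrite /c dotpp_eq0 // b0 mulr0 expr0n.
have b_gt0 : 0 < b by rewrite lt_def b_neq0 dotpp_ge0.
have : 0 <= b * (a * b - c ^+ 2).
  have -> : b * (a * b - c ^+ 2) = \sum_(i < d) (b * u ord0 i - c * v ord0 i) ^+ 2.
    rewrite (eq_bigr (fun i => b ^+ 2 * (u ord0 i * u ord0 i)
        - (2 * b * c) * (u ord0 i * v ord0 i) + c ^+ 2 * (v ord0 i * v ord0 i))).
      by rewrite big_split /= sumrB -!mulr_sumr /a /b /c /dotp; ring.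
    by move=> i _; ring.
  by apply: sumr_ge0 => i _; rewrite sqr_ge0.
by rewrite pmulr_rge0 // subr_ge0.
Qed.

Lemma norm_dotp_le u v : `|dotp u v| <= norm2 u * norm2 v.
Proof.
rewrite /norm2 -sqrtrM ?dotpp_ge0 // -sqrtr_sqr.
by rewrite ler_sqrt ?mulr_ge0 ?dotpp_ge0 // dotp_sqr_le.
Qed.

End CauchySchwarz.

Section LinearClassifiers.
Variables (R : realType) (d : nat).

Lemma continuous_measurable_Rvec (f : 'rV[R]_d -> R) :
  continuous f -> measurable_fun [set: Rvec R d] f.
Proof.
move=> cf; apply: (measurability _ (RGenOpens.measurableE R)).
move=> _ [_ [a [b ->] <-]]; rewrite setTI; apply: sub_sigma_algebra.
by move/continuousP : cf; apply; exact: interval_open.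
Qed.

Lemma measurable_dotp (w : 'rV[R]_d) :
  measurable_fun [set: Rvec R d] (fun x : Rvec R d => dotp w x).
Proof.
rewrite /dotp; apply: measurable_sum => i; apply: measurable_funM => //.
exact: continuous_measurable_Rvec (@coord_continuous _ 1 d ord0 i).
Qed.

Lemma etaE (p : 'rV[R]_d -> R) w x : Defs.eta p w x =
  (if dotp w x <= 0 then p x else 0) + (if 0 <= dotp w x then 1 - p x else 0).
Proof.
rewrite /Defs.eta /hw.
have N1_neq1 : (-1 : R) != 1 by rewrite lt_eqF // (lt_trans ltrN10).
have [neg|pos|->] := ltgtP (dotp w x) 0.
- by rewrite ltr0_sg // N1_neq1 eqxx addr0.
- by rewrite gtr0_sg // eqxx eq_sym N1_neq1 add0r.
- by rewrite sgr0 eq_sym oner_eq0 eq_sym oppr_eq0 oner_eq0.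
Qed.

Lemma eta_ge0 (p : 'rV[R]_d -> R) w x : 0 <= p x <= 1 -> 0 <= Defs.eta p w x.
Proof. by rewrite etaE => /andP[? ?]; case: (ltgtP (dotp w x) 0) => _ /=; lra. Qed.

Lemma eta_le1 (p : 'rV[R]_d -> R) w x : 0 <= p x <= 1 -> Defs.eta p w x <= 1.
Proof. by rewrite etaE => /andP[? ?]; case: (ltgtP (dotp w x) 0) => _ /=; lra. Qed.

Lemma measurable_eta (p : Rvec R d -> R) w : measurable_fun setT p ->
  measurable_fun [set: Rvec R d] (Defs.eta p w).
Proof.
move=> mp; rewrite (funext (etaE p w)).
have mdotp := measurable_dotp w.
by apply: measurable_funD; apply: measurable_fun_ifT => //;
  [apply: measurable_fun_ler | apply: measurable_fun_ler | apply: measurable_funB].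
Qed.

Lemma measurable_margin_set gamma w : measurable (margin_set gamma w : set (Rvec R d)).
Proof.
have := measurableT_comp (@normr_measurable R setT) (measurable_dotp w) measurableT
  (@measurable_itv R `[gamma, +oo[).
by rewrite setTI; congr measurable; apply/seteqP; split => x /=; rewrite in_itv /= andbT.
Qed.

End LinearClassifiers.

Section ConditionalExpectation.
Variables (R : realType) (d : nat) (P : probability (Rvec R d) R).
Variable A : set (Rvec R d).
Implicit Types f g : Rvec R d -> R.

Lemma condE_ge0 f : (forall x, A x -> 0 <= f x) -> 0 <= condE P A f.
Proof. by move=> f0; rewrite divr_ge0 ?Rintegral_ge0 ?fine_ge0. Qed.

Lemma condEZl f c : measurable A -> P.-integrable A (EFin \o f) ->
  condE P A (fun x => c * f x) = c * condE P A f.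
Proof. by move=> mA intf; rewrite /condE RintegralZl // mulrA. Qed.

Lemma ler_condE f g : Rintegral P A f <= Rintegral P A g ->
  condE P A f <= condE P A g.
Proof. by move=> fg; rewrite ler_wpM2r ?invr_ge0 ?fine_ge0. Qed.

End ConditionalExpectation.

Section MarginObjectives.
Variables (R : realType) (d : nat) (P : probability (Rvec R d) R).
Variables (p : Rvec R d -> R) (gamma Rad : R) (w : 'rV[R]_d).
Hypothesis mp : measurable_fun setT p.
Hypothesis p01 : forall x, 0 <= p x <= 1.
Hypothesis Rad_ge0 : 0 <= Rad.
Hypothesis norm2_le_Rad : {ae P, forall x : Rvec R d, norm2 x <= Rad}.
Hypothesis w_le1 : norm2 w <= 1.

Let A := margin_set gamma w.
Let mA : measurable A := measurable_margin_set gamma w.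
Let eta0 x : 0 <= Defs.eta p w x := eta_ge0 w (p01 x).
Let eta1 x : Defs.eta p w x <= 1 := eta_le1 w (p01 x).

Lemma obj_bar_ge0 : 0 <= obj_bar P p gamma w.
Proof. exact: condE_ge0. Qed.

Let integrable_eta : P.-integrable A (EFin \o Defs.eta p w).
Proof.
apply: (@ae_bounded_integrable _ _ _ P _ _ 1 mA).
  exact: measurable_funS (measurable_eta w mp).
by apply: aeW => x _; rewrite ger0_norm.
Qed.

Let integrable_scaled_eta c :
  P.-integrable A (EFin \o (fun x => c * Defs.eta p w x)).
Proof.
apply: (@ae_bounded_integrable _ _ _ P _ _ `|c| mA).
  by apply: measurable_funM => //; exact: measurable_funS (measurable_eta w mp).
by apply: aeW => x _; rewrite normrM [`|Defs.eta _ _ _|]ger0_norm //; exact: ler_piMr.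
Qed.

Lemma norm_dotp_le_norm2 x : `|dotp w x| <= norm2 x.
Proof.
apply: le_trans (norm_dotp_le w x) _.
by apply: ler_piMl; rewrite ?sqrtr_ge0.
Qed.

Let integrable_tilde :
  P.-integrable A (EFin \o (fun x => `|dotp w x| * Defs.eta p w x)).
Proof.
apply: (@ae_bounded_integrable _ _ _ P _ _ Rad mA).
  apply: measurable_funM; last exact: measurable_funS (measurable_eta w mp).
  exact: measurable_funS (measurableT_comp (@normr_measurable R setT) (measurable_dotp w)).
apply: filterS norm2_le_Rad => x xR _.
rewrite normrM normr_id ger0_norm // (le_trans _ xR) //.
exact/(le_trans _ (norm_dotp_le_norm2 x))/ler_piMr.
Qed.

Lemma margin_obj_bar_le : gamma * obj_bar P p gamma w <= obj_tilde P p gamma w.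
Proof.
rewrite /obj_bar -condEZl //; apply/ler_condE/le_Rintegral => // x Ax.
by rewrite ler_wpM2r.
Qed.

Lemma obj_tilde_le : obj_tilde P p gamma w <= Rad * obj_bar P p gamma w.
Proof.
rewrite /obj_bar -condEZl //; apply/ler_condE/ae_ge0_le_Rintegral => //.
- by move=> x _; rewrite mulr_ge0.
- by move=> x _; rewrite mulr_ge0.
apply: filterS norm2_le_Rad => x xR _.
by rewrite ler_wpM2r // (le_trans (norm_dotp_le_norm2 x)).
Qed.

End MarginObjectives.

Theorem lemma2p4 (R : realType) (d : nat)
  (P : probability (Rvec R d) R)          (* marginal D_x on R^d *)
  (p : Rvec R d -> R)                       (* p x = P[y = +1 | x] *)
  (Rad gamma : R) (wt wb : 'rV[R]_d) :
  measurable_fun setT p ->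
  (forall x, 0 <= p x <= 1) ->
  ess_sup P (fun x : Rvec R d => (norm2 x)%:E) = Rad%:E ->
  0 < gamma ->
  feasible P gamma wt ->
  (forall w, feasible P gamma w -> obj_tilde P p gamma wt <= obj_tilde P p gamma w) ->
  feasible P gamma wb ->
  (forall w, feasible P gamma w -> obj_bar P p gamma wb <= obj_bar P p gamma w) ->
  gamma / Rad * obj_bar P p gamma wt <= obj_bar P p gamma wb
  /\ obj_bar P p gamma wb <= obj_bar P p gamma wt.
Proof.
move=> mp p01 ess_sup_Rad _ wt_feas wt_opt wb_feas wb_opt.
split; last exact: wb_opt.
have norm2_le_Rad : {ae P, forall x : Rvec R d, norm2 x <= Rad}.
  have := ess_sup_ge P (fun x : Rvec R d => (norm2 x)%:E).
  by rewrite ess_sup_Rad; apply: filterS => x; rewrite lee_fin.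
have Rad_ge0 : 0 <= Rad.
  rewrite -lee_fin -ess_sup_Rad; apply: ess_sup_ger => [|x]; last exact: sqrtr_ge0.
  by rewrite [X in (_ < X)%E]probability_setT lte01.
have [-> | Rad_neq0] := eqVneq Rad 0.
  by rewrite invr0 mulr0 mul0r obj_bar_ge0.
have chain : gamma * obj_bar P p gamma wt <= Rad * obj_bar P p gamma wb.
  apply: le_trans (margin_obj_bar_le gamma mp p01 norm2_le_Rad wt_feas.1) _.
  apply: le_trans (wt_opt _ wb_feas) _.
  exact: (obj_tilde_le gamma mp p01 Rad_ge0 norm2_le_Rad wb_feas.1).
by rewrite mulrAC ler_pdivrMr ?lt_def ?Rad_neq0 // [leRHS]mulrC.
Qed.
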